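(* There is no nonzero $\phi\in L^2(\mathcal P,\lambda,\mathbb{R})$ with $T'(k)\phi=\phi$ (equality in $L^2$) for all $k$ in any of the following subgroups of $\mathrm{SO}(2)\times\mathrm{SO}(2)$: (1) $\mathrm{SO}(2)\times\mathrm{SO}(2)$; (2) $S^1\times C_N=\{(R(\theta),R(2\pi i/N)):\theta\in\mathbb{R},\ i\in\{0,\dots,N-1\}\}$, for any integer $N\ge 1$; (3) $C_N\times S^1=\{(R(2\pi i/N),R(\theta)):\theta\in\mathbb{R},\ i\in\{0,\dots,N-1\}\}$, for any integer $N\ge 1$; (4) $H(N,q_0,p_0)=\{(R(q_0\theta),R(p_0\theta+2\pi i/N)):\theta\in\mathbb{R},\ i\in\{0,\dots,N-1\}\}$, where $N\ge 1$ is an integer and $q_0,p_0$ are relatively prime integers with $p_0>0$, $q_0\neq 0$, and at least one of $N,q_0,p_0$ is even.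
   Context: $R(\theta)=\begin{pmatrix}\cos\theta & \sin\theta\\ -\sin\theta & \cos\theta\end{pmatrix}$. Let $P_1(\mathbb{R})=\mathbb{R}\cup\{\infty\}$ be the real projective line with projective coordinate $x$, and $\mathcal P=P_1(\mathbb{R})\times P_1(\mathbb{R})$ (a torus). Using angular coordinates $x=\cot(\rho/2)$, $y=\cot(\sigma/2)$, $\lambda$ is the measure on $\mathcal P$ invariant under $\mathrm{SO}(2)\times\mathrm{SO}(2)$ (Lebesgue measure $d\rho\,d\sigma$), and $L^2(\mathcal P,\lambda,\mathbb{R})$ is the real Hilbert space of square-integrable real functions on $\mathcal P$. For $g=\begin{pmatrix}a&b\\c&d\end{pmatrix}\in \mathrm{SL}(2,\mathbb{R})$ and $x\in P_1(\mathbb{R})$ put $xg=\frac{xa+c}{xb+d}$, $k_g(x)=\left(\frac{(xb+d)^2+(xa+c)^2}{1+x^2}\right)^{1/2}$, $s_g(x)=\frac{xb+d}{|xb+d|}$. The group $\mathrm{SL}(2,\mathbb{R})\times\mathrm{SL}(2,\mathbb{R})$ acts on $L^2(\mathcal P,\lambda,\mathbb{R})$ by $(T'(g,h)\phi)(x,y)=k_g^{-3}(x)s_g(x)k_h^{-3}(y)s_h(y)\phi(xg,yh)$. *)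

From HB Require Import structures.
From mathcomp Require Import all_boot all_order all_algebra.
From mathcomp Require Import all_classical all_reals all_analysis.
Set Implicit Arguments. Unset Strict Implicit. Unset Printing Implicit Defensive.
Import Order.TTheory GRing.Theory Num.Theory.
Import numFieldNormedType.Exports.
Local Open Scope classical_set_scope.
Local Open Scope ring_scope.

Section Defs.
Variable R : realType.

Definition rot (t : R) : 'M[R]_2 :=
  \matrix_(i < 2, j < 2)
    (if i == j then cos t else if (i < j)%N then sin t else - sin t).

Definition ma (g : 'M[R]_2) := g ord0 ord0.
Definition mb (g : 'M[R]_2) := g ord0 ord_max.
Definition mc (g : 'M[R]_2) := g ord_max ord0.
Definition md (g : 'M[R]_2) := g ord_max ord_max.

(* projective coordinate action x g = (xa+c)/(xb+d), in the affine chart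
   (the point where xb+d = 0 is sent anywhere: it is a lambda-null set) *)
Definition pact (g : 'M[R]_2) (x : R) : R :=
  (x * ma g + mc g) / (x * mb g + md g).

Definition kfac (g : 'M[R]_2) (x : R) : R :=
  Num.sqrt (((x * mb g + md g) ^+ 2 + (x * ma g + mc g) ^+ 2) / (1 + x ^+ 2)).

Definition sfac (g : 'M[R]_2) (x : R) : R :=
  (x * mb g + md g) / `|x * mb g + md g|.

Definition Tp (k : 'M[R]_2 * 'M[R]_2) (phi : R * R -> R) (z : R * R) : R :=
  (kfac k.1 z.1 ^+ 3)^-1 * sfac k.1 z.1 * (kfac k.2 z.2 ^+ 3)^-1 * sfac k.2 z.2
  * phi (pact k.1 z.1, pact k.2 z.2).

Definition cot (t : R) : R := cos t / sin t.

(* angular coordinates: (rho, sigma) in ]0,2pi[^2  |->  (cot(rho/2), cot(sigma/2));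
   this covers P minus the null set {x = oo} \/ {y = oo} *)
Definition ang (w : R * R) : R * R := (cot (w.1 / 2), cot (w.2 / 2)).

Definition sq : set (R * R) :=
  `]0, 2 * pi[%classic `*` `]0, 2 * pi[%classic.

Definition leb2 := (@lebesgue_measure R \x @lebesgue_measure R)%E.

Definition inL2 (phi : R * R -> R) : Prop :=
  measurable_fun setT phi /\
  (\int[leb2]_(w in sq) ((phi (ang w)) ^+ 2)%:E < +oo)%E.

Definition L2eq (phi psi : R * R -> R) : Prop :=
  ae_eq leb2 sq (fun w => phi (ang w)) (fun w => psi (ang w)).

Definition no_invariant (G : set ('M[R]_2 * 'M[R]_2)) : Prop :=
  forall phi : R * R -> R, inL2 phi ->
    (forall k, G k -> L2eq (Tp k phi) phi) -> L2eq phi (fun _ => 0).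

Definition SO2xSO2 : set ('M[R]_2 * 'M[R]_2) :=
  [set k | exists a b : R, k = (rot a, rot b)].

Definition S1xCN (N : nat) : set ('M[R]_2 * 'M[R]_2) :=
  [set k | exists (t : R) (i : nat), (i < N)%N /\
     k = (rot t, rot (2 * pi * i%:R / N%:R))].

Definition CNxS1 (N : nat) : set ('M[R]_2 * 'M[R]_2) :=
  [set k | exists (t : R) (i : nat), (i < N)%N /\
     k = (rot (2 * pi * i%:R / N%:R), rot t)].

Definition Hgrp (N : nat) (q0 p0 : int) : set ('M[R]_2 * 'M[R]_2) :=
  [set k | exists (t : R) (i : nat), (i < N)%N /\
     k = (rot (q0%:~R * t), rot (p0%:~R * t + 2 * pi * i%:R / N%:R))].

End Defs.

From Pilot Require Import Defs.
From HB Require Import structures.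
From mathcomp Require Import all_boot all_order all_algebra.
From mathcomp Require Import all_classical all_reals all_analysis.
From mathcomp Require Import ring lra.
Import Order.TTheory GRing.Theory Num.Theory.
Local Open Scope ring_scope.

(* Each of the groups contains an element (R(a), R(b)) with a, b integer
   multiples of pi and cos a cos b = -1; such an element acts by T' = -id,
   so an invariant phi satisfies phi = -phi almost everywhere. *)

Section NegatingElement.
Variable R : realType.

Lemma no_invariant_of_negation {G : set ('M[R]_2 * 'M[R]_2)} {k : 'M[R]_2 * 'M[R]_2} :
  G k -> (forall phi z, Tp k phi z = - phi z) -> no_invariant G.
Proof.
move=> Gk Tk_neg phi _ /(_ k Gk); rewrite /L2eq /ae_eq.
by apply: filterS => w + Dw => /(_ Dw); rewrite Tk_neg; lra.
Qed.

Lemma rot_fix_of_sin0 (t x : R) : sin t = 0 ->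
  [/\ pact (Defs.rot t) x = x, kfac (Defs.rot t) x = 1
    & sfac (Defs.rot t) x = cos t].
Proof.
move=> sin_t0.
have cos_t2 : cos t ^+ 2 = 1 by rewrite -(cos2Dsin2 t) sin_t0 expr0n addr0.
have cos_t_neq0 : cos t != 0 by rewrite -sqrf_eq0 cos_t2 oner_eq0.
have norm_cos_t : `|cos t| = 1 by rewrite -sqrtr_sqr cos_t2 sqrtr1.
have x2D1_neq0 : 1 + x ^+ 2 != 0 by rewrite lt0r_neq0 // ltr_pwDl ?sqr_ge0.
rewrite /pact /kfac /sfac /ma /mb /mc /md !mxE /= sin_t0 oppr0 !mulr0 !add0r !addr0.
split.
- by rewrite mulfK.
- by rewrite exprMn cos_t2 mulr1 divff ?sqrtr1.
- by rewrite norm_cos_t divr1.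
Qed.

Lemma Tp_rot_sin0 (a b : R) phi z : sin a = 0 -> sin b = 0 ->
  Tp (Defs.rot a, Defs.rot b) phi z = cos a * cos b * phi z.
Proof.
move=> sin_a0 sin_b0; case: z => x y.
have [pa ka sa] := @rot_fix_of_sin0 a x sin_a0.
have [pb kb sb] := @rot_fix_of_sin0 b y sin_b0.
by rewrite /Tp /= pa ka sa pb kb sb expr1n invr1 !mul1r mulr1.
Qed.

Lemma no_invariant_of_rot {G : set ('M[R]_2 * 'M[R]_2)} {a b : R} :
  G (Defs.rot a, Defs.rot b) -> sin a = 0 -> sin b = 0 ->
  cos a * cos b = -1 -> no_invariant G.
Proof.
move=> Gab sin_a0 sin_b0 cos_ab; apply: (no_invariant_of_negation Gab).
by move=> phi z; rewrite Tp_rot_sin0 // cos_ab mulN1r.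
Qed.

Lemma sin_cos_natpi (n : nat) : sin (n%:R * pi) = 0 :> R /\
  cos (n%:R * pi) = (if odd n then -1 else 1) :> R.
Proof.
elim: n => [|n [IHs IHc]]; first by rewrite mul0r sin0 cos0.
rewrite -addn1 natrD mulrDl mul1r sinDpi cosDpi IHs IHc oppr0 addn1 /=.
by case: (odd n); rewrite ?opprK.
Qed.

Lemma sin_intpi (z : int) : sin (z%:~R * pi) = 0 :> R.
Proof.
case: z => n; first by have [] := sin_cos_natpi n.
by rewrite NegzE mulrNz mulNr sinN; have [-> _] := sin_cos_natpi n.+1; rewrite oppr0.
Qed.

Lemma cos_intpi (z : int) :
  cos (z%:~R * pi) = (if (2 %| z)%Z then 1 else -1) :> R.
Proof.
case: z => n.
  by have [_ ->] := sin_cos_natpi n; rewrite dvdzE /= dvdn2; case: (odd n).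
rewrite NegzE mulrNz mulNr cosN; have [_ ->] := sin_cos_natpi n.+1.
by rewrite dvdzE /= dvdn2 /=; case: (odd n).
Qed.

Lemma half_turn_of_even (N : nat) :
  (0 < N)%N -> ~~ odd N -> 2 * pi * (N./2)%:R / N%:R = pi :> R.
Proof.
move=> N_gt0 N_even.
have N_double : N = (N./2).*2 by rewrite -{1}(odd_double_half N) (negbTE N_even).
have half_neq0 : (N./2)%:R != 0 :> R.
  by rewrite pnatr_eq0 -double_eq0 -N_double -lt0n.
rewrite {2}N_double -muln2 natrM.
by field.
Qed.

Lemma Hgrp_at_pi (N : nat) (q0 p0 : int) (i : nat) : (i < N)%N ->
  @Hgrp R N q0 p0
    (Defs.rot (q0%:~R * pi), Defs.rot (p0%:~R * pi + 2 * pi * i%:R / N%:R)).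
Proof. by move=> i_lt_N; exists pi, i; rewrite ![_ * pi]mulrC. Qed.

Lemma no_invariant_Hgrp (N : nat) (q0 p0 : int) :
  (0 < N)%N -> coprimez q0 p0 ->
  [|| ~~ odd N, (2 %| q0)%Z | (2 %| p0)%Z] -> no_invariant (@Hgrp R N q0 p0).
Proof.
move=> N_gt0 q0p0_coprime parity.
have Hgrp0 := @Hgrp_at_pi N q0 p0 0 N_gt0.
rewrite mulr0 mul0r addr0 in Hgrp0.
have cq := cos_intpi q0; have cp := cos_intpi p0.
case q0_even: (2 %| q0)%Z in cq parity; case p0_even: (2 %| p0)%Z in cp parity.
- have : (2 %| gcdz q0 p0)%Z by rewrite dvdz_gcd q0_even p0_even.
  by rewrite (eqP q0p0_coprime).
- apply: (no_invariant_of_rot Hgrp0); rewrite ?sin_intpi //.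
  by rewrite cq cp mul1r.
- apply: (no_invariant_of_rot Hgrp0); rewrite ?sin_intpi //.
  by rewrite cq cp mulr1.
have N_even : ~~ odd N by rewrite !orbF in parity.
have half_lt_N : (N./2 < N)%N.
  by rewrite ltn_half_double -addnn -{1}[N]addn0 ltn_add2l.
have Hgrp_half := @Hgrp_at_pi N q0 p0 _ half_lt_N.
rewrite half_turn_of_even // in Hgrp_half.
apply: (no_invariant_of_rot Hgrp_half); rewrite ?sinDpi ?sin_intpi ?oppr0 //.
by rewrite cosDpi cq cp opprK mulr1.
Qed.

End NegatingElement.

Theorem mainTheorem4 (R : realType) :
  no_invariant (@SO2xSO2 R)
  /\ (forall N : nat, (0 < N)%N -> no_invariant (@S1xCN R N))
  /\ (forall N : nat, (0 < N)%N -> no_invariant (@CNxS1 R N))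
  /\ (forall (N : nat) (q0 p0 : int),
        (0 < N)%N -> coprimez q0 p0 -> 0 < p0 -> q0 != 0 ->
        [|| ~~ odd N, (2 %| q0)%Z | (2 %| p0)%Z] ->
        no_invariant (@Hgrp R N q0 p0)).
Proof.
have trivial_turn N : 2 * pi * (0%N)%:R / N%:R = 0 :> R by rewrite mulr0 mul0r.
split; [|split; [|split]].
- apply: (@no_invariant_of_rot R _ pi 0); rewrite ?sinpi ?sin0 ?cospi ?cos0 ?mulr1 //.
  by exists pi, 0.
- move=> N N_gt0; apply: (@no_invariant_of_rot R _ pi 0);
    rewrite ?sinpi ?sin0 ?cospi ?cos0 ?mulr1 //.
  by exists pi, 0%N; rewrite trivial_turn.
- move=> N N_gt0; apply: (@no_invariant_of_rot R _ 0 pi);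
    rewrite ?sinpi ?sin0 ?cospi ?cos0 ?mul1r //.
  by exists pi, 0%N; rewrite trivial_turn.
- by move=> N q0 p0 N_gt0 coprime _ _; exact: no_invariant_Hgrp.
Qed.
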